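(* Let $A\in\mathbb{R}^{m\times n}_+$ with every row containing a positive entry, $r\in\mathbb{R}^m_{+}$, $c\in\mathbb{R}^n_+$, $y\in\mathbb{R}^n_{++}$, let $T\subseteq[n]$ have margin $\gamma$, and let $h:=h^{A,r,y}_T$. Then for any $\alpha$ satisfying $0\le h(\alpha)-h(1)\le\gamma$, the scaling $y':=y\circ(1_{\bar T}+\alpha1_T)$ satisfies \[\|c^{A,r}(y)-c\|_2^2-\|c^{A,r}(y')-c\|_2^2\ge2\gamma(h(\alpha)-h(1)).\]
   Context: $c^{A,r}_j(y):=\sum_{i\in[m]}r_i\frac{A_{ij}y_j}{\sum_{k\in[n]}A_{ik}y_k}$. $\bar T=[n]\setminus T$, $1_T$ the indicator of $T$, $\circ$ the entrywise product. Margin of $T$: the largest $\gamma\ge0$ such that some $\nu\in\mathbb{R}$ satisfies $\max_{j\in T}(c^{A,r}_j(y)-c_j)\le\nu-\gamma\le\nu+\gamma\le\min_{j\notin T}(c^{A,r}_j(y)-c_j)$. Proxy function: $h^{A,r,y}_T(\alpha):=\sum_{j\in T}c^{A,r}_j(y\circ(1_{\bar T}+\alpha1_T))$, $\alpha>0$. *)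

From HB Require Import structures.
From mathcomp Require Import all_boot all_order all_algebra.
Set Implicit Arguments. Unset Strict Implicit. Unset Printing Implicit Defensive.
Import Order.TTheory GRing.Theory Num.Theory.
Local Open Scope ring_scope.

Definition cAr (R : realFieldType) (m n : nat) (A : 'M[R]_(m, n))
  (r : 'I_m -> R) (y : 'I_n -> R) (j : 'I_n) : R :=
  \sum_(i < m) r i * (A i j * y j / \sum_(k < n) A i k * y k).

Definition scaleT (R : realFieldType) (n : nat) (y : 'I_n -> R)
  (T : {set 'I_n}) (alpha : R) (j : 'I_n) : R :=
  y j * (if j \in T then alpha else 1).

Definition proxy_h (R : realFieldType) (m n : nat) (A : 'M[R]_(m, n))
  (r : 'I_m -> R) (y : 'I_n -> R) (T : {set 'I_n}) (alpha : R) : R :=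
  \sum_(j in T) cAr A r (scaleT y T alpha) j.

Definition margin_ok (R : realFieldType) (m n : nat) (A : 'M[R]_(m, n))
  (r : 'I_m -> R) (c y : 'I_n -> R) (T : {set 'I_n}) (gamma nu : R) : Prop :=
  0 <= gamma /\
  (forall j, j \in T -> cAr A r y j - c j <= nu - gamma) /\
  (forall j, j \notin T -> nu + gamma <= cAr A r y j - c j).

Definition has_margin (R : realFieldType) (m n : nat) (A : 'M[R]_(m, n))
  (r : 'I_m -> R) (c y : 'I_n -> R) (T : {set 'I_n}) (gamma : R) : Prop :=
  (exists nu, margin_ok A r c y T gamma nu) /\
  (forall g', (exists nu, margin_ok A r c y T g' nu) -> g' <= gamma).

Definition sqdist (R : realFieldType) (n : nat) (u v : 'I_n -> R) : R :=
  \sum_(j < n) (u j - v j) ^+ 2.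

(* Rescaling the columns in T by alpha only moves mass between T and its
   complement: sum_j c^{A,r}_j = sum_i r_i is conserved, while the coordinates
   in T move in the direction of alpha - 1 and the others in the opposite one.
   So d := h(alpha) - h(1) >= 0 is the mass moved into T and no coordinate moves
   by more than d.  By the margin, every unit taken from a coordinate with
   c^{A,r}_j(y) - c_j >= nu + gamma and given to one with <= nu - gamma lowers the
   squared distance by at least 4 gamma - 2 d >= 2 gamma. *)
From HB Require Import structures.
From mathcomp Require Import all_boot all_order all_algebra.
From mathcomp Require Import ring lra.
Set Implicit Arguments.
Unset Strict Implicit.
Unset Printing Implicit Defensive.

Import Order.TTheory GRing.Theory Num.Theory.
Local Open Scope ring_scope.

Lemma ler_psumr_term (R : realFieldType) (I : finType) (P : pred I) (F : I -> R) :
  (forall i, P i -> 0 <= F i) ->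
  forall j, P j -> F j <= \sum_(i | P i) F i.
Proof.
move=> F_ge0 j Pj; rewrite (bigD1 j) //= lerDl.
by apply: sumr_ge0 => i /andP[Pi _]; exact: F_ge0.
Qed.

Lemma nsumr_ge0_eq0 (R : realFieldType) (I : finType) (P : pred I) (F : I -> R) :
  (forall i, P i -> F i <= 0) -> 0 <= \sum_(i | P i) F i ->
  forall j, P j -> F j = 0.
Proof.
move=> F_le0 sum_ge0 j Pj; apply/le_anti; rewrite F_le0 //= -oppr_le0.
have NF_ge0 i : P i -> 0 <= - F i by rewrite oppr_ge0; exact: F_le0.
apply: le_trans (ler_psumr_term NF_ge0 Pj) _.
by rewrite sumrN oppr_le0.
Qed.

Lemma subr_sqr_ge (R : realFieldType) (x a e d : R) :
  x <= a -> 0 <= e <= d -> - (2 * a + d) * e <= x ^+ 2 - (x + e) ^+ 2.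
Proof. by move=> le_xa /andP[e_ge0 le_ed]; nra. Qed.

Lemma ler_scaled_share (R : realFieldType) (x S U a b : R) :
  0 <= x -> 0 <= S -> 0 <= U -> 0 < a -> a <= b -> 0 < a * S + U ->
  x * a / (a * S + U) <= x * b / (b * S + U).
Proof.
move=> x_ge0 S_ge0 U_ge0 a_gt0 le_ab Da_gt0.
have Db_gt0 : 0 < b * S + U by nra.
rewrite ler_pdivrMr // mulrAC ler_pdivlMr // -subr_ge0.
have -> : x * b * (a * S + U) - x * a * (b * S + U) = x * U * (b - a) by ring.
by rewrite !mulr_ge0 // subr_ge0.
Qed.

Lemma ger_unscaled_share (R : realFieldType) (x S U a b : R) :
  0 <= x -> 0 <= S -> a <= b -> 0 < a * S + U ->
  x / (b * S + U) <= x / (a * S + U).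
Proof.
move=> x_ge0 S_ge0 le_ab Da_gt0.
by apply: ler_wpM2l => //; rewrite lef_pV2 ?posrE //; nra.
Qed.

Definition flows_into (R : realFieldType) n (T : {set 'I_n}) (u v : 'I_n -> R) :=
  (forall j, j \in T -> u j <= v j) /\ (forall j, j \notin T -> v j <= u j).

Section MassTransfer.
Variables (R : realFieldType) (n : nat) (T : {set 'I_n}) (u v : 'I_n -> R).
Hypothesis mass_eq : \sum_j u j = \sum_j v j.

Lemma sum_notin_subr :
  \sum_(j | j \notin T) (u j - v j) = \sum_(j in T) (v j - u j).
Proof.
move: mass_eq; rewrite (bigID (mem T)) [X in _ = X](bigID (mem T)) /= !sumrB.
by lra.
Qed.

Lemma flows_intoC : flows_into T v u -> 0 <= \sum_(j in T) (v j - u j) ->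
  flows_into T u v.
Proof.
move=> [in_le out_ge] sum_ge0.
have in_eq : forall j, j \in T -> v j - u j = 0.
  by apply: nsumr_ge0_eq0 sum_ge0 => j jT; rewrite subr_le0 in_le.
have out_eq : forall j, j \notin T -> u j - v j = 0.
  by apply: nsumr_ge0_eq0; rewrite ?sum_notin_subr // => j jT; rewrite subr_le0 out_ge.
by split=> j jT; rewrite -subr_ge0 ?in_eq ?out_eq.
Qed.

Variables (c : 'I_n -> R) (gamma nu : R).
Hypothesis margin_in : forall j, j \in T -> u j - c j <= nu - gamma.
Hypothesis margin_out : forall j, j \notin T -> nu + gamma <= u j - c j.

Lemma sqdist_flows_into_gain : flows_into T u v ->
  \sum_(j in T) (v j - u j) <= gamma ->
  2 * gamma * \sum_(j in T) (v j - u j) <= sqdist u c - sqdist v c.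
Proof.
move=> [in_le out_ge]; set d := \sum_(j in T) _ => d_le.
have in_ge0 j : j \in T -> 0 <= v j - u j by rewrite subr_ge0; exact: in_le.
have out_ge0 j : j \notin T -> 0 <= u j - v j by rewrite subr_ge0; exact: out_ge.
have d_ge0 : 0 <= d by exact: sumr_ge0.
have in_gain : - (2 * (nu - gamma) + d) * d <=
    \sum_(j in T) ((u j - c j) ^+ 2 - (v j - c j) ^+ 2).
  rewrite mulr_sumr; apply: ler_sum => j jT.
  have -> : v j - c j = u j - c j + (v j - u j) by ring.
  by apply: subr_sqr_ge; [exact: margin_in | rewrite in_ge0 //= ler_psumr_term].
have out_gain : (2 * (nu + gamma) - d) * d <=
    \sum_(j | j \notin T) ((u j - c j) ^+ 2 - (v j - c j) ^+ 2).
  have dE : d = \sum_(j | j \notin T) (u j - v j) by rewrite sum_notin_subr.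
  rewrite {2}dE mulr_sumr; apply: ler_sum => j jT.
  have -> : (u j - c j) ^+ 2 - (v j - c j) ^+ 2 =
      (c j - u j) ^+ 2 - (c j - u j + (u j - v j)) ^+ 2 by ring.
  have -> : (2 * (nu + gamma) - d) = - (2 * - (nu + gamma) + d) by ring.
  apply: subr_sqr_ge; first by have := margin_out jT; lra.
  by rewrite out_ge0 //= dE ler_psumr_term.
have slack : 0 <= d * (gamma - d) by rewrite mulr_ge0 // subr_ge0.
rewrite /sqdist -sumrB (bigID (mem T)) /=.
lra.
Qed.

End MassTransfer.

Lemma eq_cAr (R : realFieldType) m n (A : 'M[R]_(m, n)) r (y1 y2 : 'I_n -> R) :
  y1 =1 y2 -> cAr A r y1 =1 cAr A r y2.
Proof.
move=> e j; apply: eq_bigr => i _; rewrite e; congr (_ * (_ / _)).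
by apply: eq_bigr => k _; rewrite e.
Qed.

Lemma scaleT1 (R : realFieldType) n (y : 'I_n -> R) T : scaleT y T 1 =1 y.
Proof. by move=> j; rewrite /scaleT; case: ifP; rewrite mulr1. Qed.

Lemma scaleT_gt0 (R : realFieldType) n (y : 'I_n -> R) T a :
  (forall j, 0 < y j) -> 0 < a -> forall j, 0 < scaleT y T a j.
Proof. by move=> y_gt0 a_gt0 j; rewrite /scaleT; case: ifP; rewrite ?mulr1 ?mulr_gt0. Qed.

Lemma row_dot_scaleT (R : realFieldType) m n (A : 'M[R]_(m, n)) y T a i :
  \sum_k A i k * scaleT y T a k =
  a * \sum_(k in T) A i k * y k + \sum_(k | k \notin T) A i k * y k.
Proof.
rewrite (bigID (mem T)) /= mulr_sumr; congr (_ + _); apply: eq_bigr => k kT.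
  by rewrite /scaleT kT mulrA mulrC.
by rewrite /scaleT (negbTE kT) mulr1.
Qed.

Section ProportionalShares.
Variables (R : realFieldType) (m n : nat) (A : 'M[R]_(m, n)) (r : 'I_m -> R).
Hypothesis A_ge0 : forall i j, 0 <= A i j.
Hypothesis A_row : forall i, exists j, 0 < A i j.

Lemma row_dot_gt0 (y : 'I_n -> R) i :
  (forall j, 0 < y j) -> 0 < \sum_k A i k * y k.
Proof.
move=> y_gt0; have [j Aij_gt0] := A_row i.
rewrite (bigD1 j) //= ltr_pwDl ?mulr_gt0 //.
by apply: sumr_ge0 => k _; rewrite mulr_ge0 // ltW.
Qed.

Lemma sum_cAr (y : 'I_n -> R) :
  (forall j, 0 < y j) -> \sum_j cAr A r y j = \sum_i r i.
Proof.
move=> y_gt0; rewrite exchange_big; apply: eq_bigr => i _.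
by rewrite -mulr_sumr -mulr_suml mulfV ?mulr1 // gt_eqF ?row_dot_gt0.
Qed.

Hypothesis r_ge0 : forall i, 0 <= r i.

Lemma cAr_scaleT_flows_into (y : 'I_n -> R) T a b :
  (forall j, 0 < y j) -> 0 < a -> a <= b ->
  flows_into T (cAr A r (scaleT y T a)) (cAr A r (scaleT y T b)).
Proof.
move=> y_gt0 a_gt0 ab.
have Ay_ge0 i (P : pred 'I_n) : 0 <= \sum_(k | P k) A i k * y k.
  by apply: sumr_ge0 => k _; rewrite mulr_ge0 // ltW.
have den_gt0 i :
    0 < a * \sum_(k in T) A i k * y k + \sum_(k | k \notin T) A i k * y k.
  by rewrite -row_dot_scaleT; apply/row_dot_gt0/scaleT_gt0.
split=> j jT; apply: ler_sum => i _; apply: ler_wpM2l => //.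
  rewrite !row_dot_scaleT /scaleT jT !mulrA.
  by apply: ler_scaled_share => //; rewrite mulr_ge0 // ltW.
rewrite !row_dot_scaleT /scaleT (negbTE jT) !mulr1.
by apply: ger_unscaled_share => //; rewrite mulr_ge0 // ltW.
Qed.

End ProportionalShares.

Theorem lemma6p7 (R : realFieldType) (m n : nat) (A : 'M[R]_(m, n))
  (r : 'I_m -> R) (c y : 'I_n -> R) (T : {set 'I_n}) (gamma alpha : R) :
  (forall i j, 0 <= A i j) ->
  (forall i, exists j, 0 < A i j) ->
  (forall i, 0 <= r i) ->
  (forall j, 0 <= c j) ->
  (forall j, 0 < y j) ->
  has_margin A r c y T gamma ->
  0 < alpha ->
  0 <= proxy_h A r y T alpha - proxy_h A r y T 1 <= gamma ->
  sqdist (cAr A r y) c - sqdist (cAr A r (scaleT y T alpha)) c >=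
    2 * gamma * (proxy_h A r y T alpha - proxy_h A r y T 1).
Proof.
move=> A_ge0 A_row r_ge0 _ y_gt0 [[nu [_ [margin_in margin_out]]] _] alpha_gt0.
set u := cAr A r y in margin_in margin_out *; set v := cAr A r (scaleT y T alpha).
have u1 : cAr A r (scaleT y T 1) =1 u by exact: eq_cAr (scaleT1 y T).
have -> : proxy_h A r y T alpha - proxy_h A r y T 1 = \sum_(j in T) (v j - u j).
  by rewrite /proxy_h -sumrB; apply: eq_bigr => j _; rewrite u1.
move=> /andP[gain_ge0 gain_le].
have mass_eq : \sum_j u j = \sum_j v j.
  by rewrite !sum_cAr //; exact: scaleT_gt0.
have flow : flows_into T u v.
  have shares_flow := cAr_scaleT_flows_into A_ge0 A_row r_ge0 T y_gt0.
  case: (lerP 1 alpha) => [alpha_ge1|/ltW alpha_le1].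
    have [in_le out_ge] := shares_flow _ _ ltr01 alpha_ge1.
    by split=> j jT; rewrite -u1; [exact: in_le | exact: out_ge].
  have [in_ge out_le] := shares_flow _ _ alpha_gt0 alpha_le1.
  (* Shrinking T moves mass out of T, so h(alpha) >= h(1) forces c(y') = c(y). *)
  apply: flows_intoC mass_eq _ gain_ge0.
  by split=> j jT; rewrite -u1; [exact: in_ge | exact: out_le].
exact: (sqdist_flows_into_gain mass_eq margin_in margin_out flow gain_le).
Qed.
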